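(* Let $k\ge 4$, $n=2k-1$, $\eta=(\eta_1<\dots<\eta_l)\in\mathbb{D}_k\setminus\{(3,k-3)\}$, and let $Y_{2\eta^*}$ be the Young diagram whose main diagonal consists of exactly the cells $c_{1,1},\dots,c_{l+1,l+1}$ and which satisfies $h_{1,1}=2n-4$, $h_{i,i}=2\eta_{l-(i-2)}$ for $2\le i\le l+1$, and $a(c_{i,i})=l(c_{i,i})+1$ for $1\le i\le l+1$. Let $\lambda$ be the partition whose parts are the hook lengths of the cells of the first column of $Y_{2\eta^*}$. Then $\lambda$ is a partition of $T_n=n(n+1)/2$.
   Context: $\mathbb{D}_N$ is the set of partitions of $N$ into distinct parts, i.e. sequences $(\lambda_1<\dots<\lambda_t)$ of positive integers with sum $N$ and $t\ge 2$. Young diagrams are in English convention: rows top to bottom, columns left to right, $c_{i,j}$ the cell in row $i$, column $j$; arm $a(c_{i,j})$ = number of cells to its right in its row, leg $l(c_{i,j})$ = number of cells below it in its column, hook length $h_{i,j}=a+l+1$. (The hook lengths of the first-column cells of a Young diagram are pairwise distinct; the resulting partition is the complement in $\mathbb{N}_0$ of the numerical set corresponding to the diagram under the Keith–Nath transformation.) *)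

From mathcomp Require Import all_boot.
Set Implicit Arguments. Unset Strict Implicit. Unset Printing Implicit Defensive.

Definition distinct_partition (N : nat) (eta : seq nat) : bool :=
  [&& sorted ltn eta, all (fun x => 0 < x) eta, sumn eta == N & 2 <= size eta].

(* 1-indexed part of an increasing sequence: part eta m = eta_m. *)
Definition part (eta : seq nat) (m : nat) : nat := nth 0 eta m.-1.

(* A Young diagram (English convention) is given by its row lengths from
   top to bottom: a weakly decreasing sequence of positive integers. *)
Definition young (s : seq nat) : bool :=
  sorted geq s && all (fun r => 0 < r) s.

(* length of row i (1-indexed); 0 if no such row *)
Definition row (s : seq nat) (i : nat) : nat := nth 0 s i.-1.
Definition col (s : seq nat) (j : nat) : nat := count (fun r => j <= r) s.
Definition in_diagram (s : seq nat) (i j : nat) : bool :=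
  [&& 1 <= i, 1 <= j, i <= size s & j <= row s i].
Definition arm (s : seq nat) (i j : nat) : nat := row s i - j.
Definition leg (s : seq nat) (i j : nat) : nat := col s j - i.
Definition hook (s : seq nat) (i j : nat) : nat := arm s i j + leg s i j + 1.

Definition first_column_hooks (s : seq nat) : seq nat :=
  [seq hook s i 1 | i <- iota 1 (size s)].

From mathcomp Require Import all_boot zify.

Set Implicit Arguments.
Unset Strict Implicit.
Unset Printing Implicit Defensive.

(* The hooks of the diagonal cells partition the diagram, so the prescribed
   diagonal hooks give |Y| = (4k - 6) + 2(eta_1 + ... + eta_l) = 6k - 6.
   The hook of c_{i,1} is row i plus the m - i rows below it, m the number
   of rows, so the first column hooks add up to |Y| + C(m, 2); and
   a(c_{1,1}) = l(c_{1,1}) + 1 turns h_{1,1} = 4k - 6 into m = 2k - 3.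
   Finally (6k - 6) + (2k - 3)(k - 2) = k(2k - 1) = T_{2k-1}. *)

Lemma sum_nth_take (s : seq nat) n :
  \sum_(1 <= i < n.+1) nth 0 s i.-1 = sumn (take n s).
Proof.
rewrite big_add1 /=; elim: n s => [|n IH] s; first by rewrite big_geq ?take0.
case: s => [|x s] /=; first by rewrite big1 // => i _; rewrite nth_nil.
by rewrite big_nat_recl // IH.
Qed.

Lemma sum_count_geq (t : seq nat) d : all (fun r => r <= d) t ->
  \sum_(1 <= i < d.+1) count (fun r => i <= r) t = sumn t.
Proof.
have sum_le x : \sum_(1 <= i < d.+1) (i <= x) = minn x d.
  elim: d => [|d IH]; first by rewrite big_geq //; lia.
  by rewrite big_nat_recr //= IH; lia.
elim: t => [|x t IH] /=; first by rewrite big1.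
by case/andP=> x_le t_le; rewrite big_split /= IH // sum_le; lia.
Qed.

Lemma sum_odd d : \sum_(1 <= i < d.+1) (2 * i - 1) = d * d.
Proof.
elim: d => [|d IH]; first by rewrite big_geq.
by rewrite big_nat_recr //= IH; lia.
Qed.

Section YoungDiagram.

Variable Y : seq nat.
Hypothesis youngY : young Y.

Lemma row_le i j : i <= j -> row Y j <= row Y i.
Proof.
move=> le_ij; rewrite /row; have [lt_jY | le_Yj] := ltnP j.-1 (size Y).
  have geq_trans : transitive geq by move=> a b c ab bc; apply: leq_trans bc ab.
  case/andP: youngY => sortedY _.
  by apply: (sorted_leq_nth geq_trans leqnn 0 sortedY); rewrite ?inE; lia.
by rewrite nth_default.
Qed.

Lemma row_gt0 i : 1 <= i <= size Y -> 0 < row Y i.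
Proof.
move=> i_in; have lt_iY : i.-1 < size Y by lia.
by case/andP: youngY => _ /allP; apply; apply: mem_nth.
Qed.

Lemma col1_size : col Y 1 = size Y.
Proof.
apply/eqP; rewrite -all_count; apply/allP=> r r_in.
by case/andP: youngY => _ /allP; apply.
Qed.

Lemma hook_first_column i : 1 <= i <= size Y ->
  hook Y i 1 = row Y i + (size Y - i).
Proof.
move=> i_in; have := row_gt0 i_in.
by rewrite /hook /arm /leg col1_size; lia.
Qed.

Lemma sumn_first_column_hooks :
  sumn (first_column_hooks Y) = sumn Y + 'C(size Y, 2).
Proof.
rewrite /first_column_hooks sumnE big_map.
have -> : iota 1 (size Y) = index_iota 1 (size Y).+1.
  by rewrite /index_iota subn1.
under eq_big_nat => i i_in do rewrite hook_first_column //.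
rewrite big_split /= sum_nth_take take_size -bin2_sum big_add1 big_nat_rev /=.
by congr (_ + _); apply: eq_big_nat => i; lia.
Qed.

Section DurfeeSquare.

Variable d : nat.
Hypothesis diagonalY : forall i, 1 <= i -> in_diagram Y i i = (i <= d).

Lemma durfee_size : d <= size Y.
Proof.
have [-> // | d_gt0] := posnP d.
by have := diagonalY d_gt0; rewrite leqnn /in_diagram; case/and4P.
Qed.

Lemma durfee_rows_large i : i <= d -> d <= row Y i.
Proof.
have [-> // | d_gt0] := posnP d; move=> le_id.
apply: leq_trans _ (row_le le_id).
by have := diagonalY d_gt0; rewrite leqnn /in_diagram; case/and4P.
Qed.

Lemma durfee_rows_small i : d < i -> row Y i <= d.
Proof.
move=> lt_di; apply: leq_trans (row_le lt_di) _.
have := diagonalY (ltn0Sn d); rewrite ltnn /in_diagram /=.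
have [_ /= /negbT | le_Yd _] := ltnP d (size Y); first by rewrite -leqNgt.
by rewrite /row nth_default.
Qed.

Lemma col_durfee i : 1 <= i <= d ->
  col Y i = d + count (fun r => i <= r) (drop d Y).
Proof.
move=> /andP[i_gt0 le_id]; rewrite /col -{1}(cat_take_drop d Y) count_cat.
congr (_ + _); rewrite -[RHS](size_takel durfee_size); apply/eqP.
rewrite -all_count; apply/(all_nthP 0) => j; rewrite size_takel ?durfee_size //.
move=> lt_jd; rewrite nth_take //; apply: leq_trans le_id _.
exact: durfee_rows_large lt_jd.
Qed.

Lemma drop_durfee_le : all (fun r => r <= d) (drop d Y).
Proof.
apply/(all_nthP 0) => j _; rewrite nth_drop.
by apply: (durfee_rows_small (i := (d + j).+1)); rewrite ltnS leq_addr.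
Qed.

(* Rows 1..d and columns 1..d cover Y and overlap in the d x d Durfee
   square, while the hook of c_{i,i} misses 2i - 1 cells of row i and
   column i. *)
Lemma sum_diagonal_hooks : \sum_(1 <= i < d.+1) hook Y i i = sumn Y.
Proof.
have hooks : \sum_(1 <= i < d.+1) hook Y i i + \sum_(1 <= i < d.+1) (2 * i - 1)
    = \sum_(1 <= i < d.+1) row Y i + \sum_(1 <= i < d.+1) col Y i.
  rewrite -!big_split /=; apply: eq_big_nat => i i_in.
  have := durfee_rows_large (i := i); have := col_durfee i_in.
  by rewrite /hook /arm /leg; lia.
move: hooks; rewrite sum_odd sum_nth_take.
under [X in _ = _ + X]eq_big_nat => i i_in do rewrite col_durfee //.
rewrite [X in _ = _ + X]big_split sum_count_geq ?drop_durfee_le //=.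
rewrite big_const_nat iter_addn_0.
by rewrite addnCA -sumn_cat cat_take_drop subn1 /=; lia.
Qed.

End DurfeeSquare.

End YoungDiagram.

Theorem proposition3p21 (k : nat) (eta : seq nat) (Y : seq nat) :
  4 <= k ->
  distinct_partition k eta ->
  eta != [:: 3; k - 3] ->
  young Y ->
  (* the main diagonal consists exactly of c_{1,1}, ..., c_{l+1,l+1} *)
  (forall i, 1 <= i -> in_diagram Y i i = (i <= (size eta).+1)) ->
  (* h_{1,1} = 2n - 4 with n = 2k - 1 *)
  hook Y 1 1 = 2 * (2 * k - 1) - 4 ->
  (* h_{i,i} = 2 eta_{l-(i-2)} for 2 <= i <= l+1 *)
  (forall i, 2 <= i <= (size eta).+1 ->
     hook Y i i = 2 * part eta (size eta - (i - 2))) ->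
  (* a(c_{i,i}) = l(c_{i,i}) + 1 for 1 <= i <= l+1 *)
  (forall i, 1 <= i <= (size eta).+1 -> arm Y i i = leg Y i i + 1) ->
  sumn (first_column_hooks Y) = (2 * k - 1) * (2 * k - 1).+1 %/ 2.
Proof.
move=> k_ge4 eta_k _ youngY diagonalY hook11 hook_diag arm_leg.
set l := size eta in diagonalY hook_diag arm_leg.
have sum_parts : \sum_(1 <= i < l.+1) part eta i = k.
  by rewrite sum_nth_take take_size; case/and4P: eta_k => _ _ /eqP.
have sizeY : size Y = 2 * k - 3.
  have := arm_leg 1 isT; have := durfee_size diagonalY.
  by move: hook11; rewrite /hook /leg col1_size //; lia.
have sum_tail : \sum_(2 <= i < l.+2) hook Y i i = 2 * k.
  under eq_big_nat => i i_in do rewrite hook_diag //.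
  rewrite -big_distrr -sum_parts big_add1 big_nat_rev /=; congr (2 * _).
  by apply: eq_big_nat => i i_in; rewrite /part; congr nth; lia.
have sumY : sumn Y = 6 * k - 6.
  by rewrite -(sum_diagonal_hooks youngY diagonalY) big_ltn // hook11 sum_tail; lia.
rewrite sumn_first_column_hooks // sumY sizeY bin2 -divn2; nia.
Qed.
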